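(* Let $\sigma>0$, $\mu_0\in\mathbb{R}^P$, $Y=\mu_0+W$ with $W\sim\mathcal N(0,\sigma^2\mathrm{Id}_P)$, $\lambda>0$ and $0<\epsilon<2\lambda$. Let $\mathrm{ST}$ be the soft-thresholding, $\mathrm{ST}(y,\lambda)_i=y_i+\lambda$ if $y_i\le-\lambda$, $0$ if $-\lambda<y_i<\lambda$, $y_i-\lambda$ otherwise, and let $$\widehat{\mathrm{df}}^{\mathrm{FD}}(y,\lambda,\epsilon)=\frac1\epsilon\sum_{i=1}^P\big(\mathrm{ST}(y+\epsilon e_i,\lambda)-\mathrm{ST}(y,\lambda)\big)_i.$$ Then the weak gradient $\nabla_2\widehat{\mathrm{df}}^{\mathrm{FD}}(y,\lambda,\epsilon)$ of $\lambda\mapsto\widehat{\mathrm{df}}^{\mathrm{FD}}(y,\lambda,\epsilon)$ satisfies $$\mathbb{E}_W\big[\nabla_2\widehat{\mathrm{df}}^{\mathrm{FD}}(Y,\lambda,\epsilon)\big]=-\frac12\sum_{i=1}^P\frac{\varphi[(\mu_0)_i,\lambda,\epsilon]}{\epsilon},$$ $$\mathbb{V}_W\big[\nabla_2\widehat{\mathrm{df}}^{\mathrm{FD}}(Y,\lambda,\epsilon)\big]=\frac1{2\epsilon}\sum_{i=1}^P\frac{\varphi[(\mu_0)_i,\lambda,\epsilon]}{\epsilon}-\frac14\sum_{i=1}^P\Big[\frac{\varphi[(\mu_0)_i,\lambda,\epsilon]}{\epsilon}\Big]^2,$$ where for $a\in\mathbb{R}$, $$\varphi[a,\lambda,\ep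silon]=\operatorname{erf}\!\Big(\tfrac{a+\lambda+\epsilon}{\sqrt2\sigma}\Big)-\operatorname{erf}\!\Big(\tfrac{a+\lambda}{\sqrt2\sigma}\Big)+\operatorname{erf}\!\Big(\tfrac{a-\lambda+\epsilon}{\sqrt2\sigma}\Big)-\operatorname{erf}\!\Big(\tfrac{a-\lambda}{\sqrt2\sigma}\Big).$$
   Context: $(e_i)$ is the canonical basis of $\mathbb{R}^P$; $\mathbb{E}_W$ and $\mathbb{V}_W$ denote expectation and variance with respect to $W$. The weak derivative of $\mathrm{ST}$ with respect to $\lambda$ is $\partial_\lambda\mathrm{ST}(y,\lambda)_i=0$ if $|y_i|\le\lambda$ and $-\operatorname{sign}(y_i)$ otherwise, so that $\nabla_2\widehat{\mathrm{df}}^{\mathrm{FD}}(y,\lambda,\epsilon)=\frac1\epsilon\sum_i\big(\partial_\lambda\mathrm{ST}(y+\epsilon e_i,\lambda)_i-\partial_\lambda\mathrm{ST}(y,\lambda)_i\big)$. *)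

From HB Require Import structures.
From mathcomp Require Import all_boot all_order all_algebra.
From mathcomp Require Import all_classical all_reals all_analysis.
Set Implicit Arguments. Unset Strict Implicit. Unset Printing Implicit Defensive.
Import Order.TTheory GRing.Theory Num.Theory.
Import numFieldNormedType.Exports.
Local Open Scope classical_set_scope.
Local Open Scope ring_scope.

Section defs.
Context {R : realType}.

Definition erf (x : R) : R :=
  2 / Num.sqrt pi *
  (if 0 <= x then Rintegral lebesgue_measure `[0, x] (fun t => expR (- t ^+ 2))
   else - Rintegral lebesgue_measure `[x, 0] (fun t => expR (- t ^+ 2))).

Definition st (lam t : R) : R :=
  if t <= - lam then t + lam else if t < lam then 0 else t - lam.

Definition ST (n : nat) (y : 'I_n -> R) (lam : R) : 'I_n -> R :=
  fun i => st lam (y i).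

Definition basis_vec (n : nat) (i : 'I_n) : 'I_n -> R :=
  fun j => (j == i)%:R.

Definition dfFD (n : nat) (y : 'I_n -> R) (lam eps : R) : R :=
  eps^-1 * \sum_(i < n)
     (ST (fun j => y j + eps * basis_vec i j) lam i - ST y lam i).

(* weak derivative of ST w.r.t. lambda (as given in the paper) *)
Definition dST (n : nat) (y : 'I_n -> R) (lam : R) : 'I_n -> R :=
  fun i => if `|y i| <= lam then 0 else - Num.sg (y i).

(* weak gradient nabla_2 dfFD (as given in the paper) *)
Definition grad2_dfFD (n : nat) (y : 'I_n -> R) (lam eps : R) : R :=
  eps^-1 * \sum_(i < n)
     (dST (fun j => y j + eps * basis_vec i j) lam i - dST y lam i).

Definition varphi (sigma a lam eps : R) : R :=
  let c := Num.sqrt 2 * sigma in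
  erf ((a + lam + eps) / c) - erf ((a + lam) / c)
  + erf ((a - lam + eps) / c) - erf ((a - lam) / c).

End defs.

(* Mutual independence of a finite family of real random variables:
   product rule for all families of Borel sets (taking B i = setT gives
   every subfamily). *)
Definition mutually_independent {d} {T : measurableType d} {R : realType}
  (P : probability T R) (n : nat) (X : 'I_n -> {RV P >-> R}) : Prop :=
  forall B : 'I_n -> set R, (forall i, measurable (B i)) ->
    P (\bigcap_(i in [set: 'I_n]) (X i @^-1` B i)) =
    (\prod_(i < n) P (X i @^-1` B i))%E.

From HB Require Import structures.
From mathcomp Require Import all_boot all_order all_algebra.
From mathcomp Require Import all_classical all_reals all_analysis.
From mathcomp Require Import measurable_realfun ring lra.
Set Implicit Arguments.
Unset Strict Implicit.
Unset Printing Implicit Defensive.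
Import Order.TTheory GRing.Theory Num.Theory.
Import numFieldNormedType.Exports.
Local Open Scope classical_set_scope.
Local Open Scope ring_scope.

(** The weak gradient only sees, in each coordinate [i], whether the noisy
    observation [mu0_i + W_i] lies in the window [(lam - eps, lam]] or
    [[-lam - eps, -lam)], where the finite difference crosses a threshold:
    it equals [-1/eps] times the number of such coordinates.  Each window has
    Gaussian probability [varphi_i / 2], computed from [erf] by a change of
    variables, and the windows of distinct coordinates are independent events.
    The mean and variance of a sum of pairwise independent indicators then give
    the two formulas. *)

Section erf.
Context {R : realType}.
Notation mu := (@lebesgue_measure R).

Lemma integrable_gauss_fun_itv (a b : R) :
  mu.-integrable `[a, b] (EFin \o gauss_fun).
Proof.
apply: continuous_compact_integrable; first exact: segment_compact.
by apply: continuous_subspaceT; exact: continuous_gauss_fun.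
Qed.

Definition oriented_gauss_integral (x : R) : R :=
  if 0 <= x then \int[mu]_(t in `[0, x]) gauss_fun t
  else - \int[mu]_(t in `[x, 0]) gauss_fun t.

Lemma erfE (x : R) : erf x = 2 / Num.sqrt pi * oriented_gauss_integral x.
Proof. by []. Qed.

Lemma Rintegral_gauss_fun_split a c b : a <= c -> c <= b ->
  \int[mu]_(t in `[a, b]) gauss_fun t =
  \int[mu]_(t in `[a, c]) gauss_fun t + \int[mu]_(t in `[c, b]) gauss_fun t.
Proof.
move=> ac cb; have iab := integrable_gauss_fun_itv a b.
rewrite -(@Rintegral_itv_obnd_cbnd _ c (BRight b)); last first.
  by apply: integrableS iab => //; apply: subset_itvr; rewrite bnd_simp.
by rewrite -(Rintegral_itvB (x := c) iab) ?bnd_simp// addrC subrK.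
Qed.

Lemma Rintegral_gauss_fun_itv a b : a <= b ->
  \int[mu]_(t in `[a, b]) gauss_fun t =
  oriented_gauss_integral b - oriented_gauss_integral a.
Proof.
move=> ab; rewrite /oriented_gauss_integral.
have [a0|a0] := leP 0 a.
  by rewrite (le_trans a0 ab) (Rintegral_gauss_fun_split a0 ab); lra.
have [b0|b0] := leP 0 b.
  by rewrite (Rintegral_gauss_fun_split (ltW a0) b0); lra.
by rewrite (Rintegral_gauss_fun_split ab (ltW b0)); lra.
Qed.

Lemma oriented_gauss_integralN x :
  oriented_gauss_integral (- x) = - oriented_gauss_integral x.
Proof.
wlog x0 : x / 0 < x.
  move=> h; have [x0|x0|->] := ltgtP x 0; last first.
  - by rewrite /oriented_gauss_integral oppr0 lexx set_itv1 Rintegral_set1 oppr0.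
  - exact: h.
  - by have := h (- x); rewrite oppr_gt0 opprK => /(_ x0) ->; rewrite opprK.
rewrite /oriented_gauss_integral oppr_ge0 (ltW x0) leNgt x0 /=; congr (- _).
rewrite /Rintegral; congr fine.
have := @integration_by_substitution_oppr R gauss_fun 0 x (ltW x0).
rewrite oppr0 => ->; last by apply: continuous_subspaceT; exact: continuous_gauss_fun.
by apply: eq_integral => y _ /=; rewrite /gauss_fun sqrrN.
Qed.

Lemma erfN (x : R) : erf (- x) = - erf x.
Proof. by rewrite !erfE oriented_gauss_integralN mulrN. Qed.

End erf.

Section normal_itv.
Context {R : realType}.
Notation mu := (@lebesgue_measure R).

Lemma integration_by_substitution_scale (k a b : R) (h : R -> R) :
  0 < k -> a <= b -> continuous h ->
  (\int[mu]_(x in `[(k * a)%R, (k * b)%R]) (h x)%:E =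
   \int[mu]_(x in `[a, b]) (h (k * x)%R * k)%:E)%E.
Proof.
move=> k0 ab ch.
have dk : (( *%R k)^`())%classic = cst k.
  by apply/funext => x; rewrite derive1E deriveZ//= derive_id /GRing.scale/= mulr1.
rewrite (@integration_by_substitution_increasing _ ( *%R k) h a b ab).
- by apply: eq_integral => x _; rewrite /= dk.
- by move=> x y _ _ xy; rewrite ltr_pM2l.
- by rewrite dk => ? _; exact: cvg_cst.
- by rewrite dk; exact: is_cvg_cst.
- by rewrite dk; exact: is_cvg_cst.
- split => //.
  + by apply: cvg_at_right_filter; exact: mulrl_continuous.
  + by apply: cvg_at_left_filter; exact: mulrl_continuous.
- exact: continuous_subspaceT.
Qed.

Lemma normal_peak_sqrt2 (s : R) : 0 < s ->
  normal_peak s * (Num.sqrt 2 * s) = (Num.sqrt pi)^-1.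
Proof.
move=> s0; rewrite /normal_peak -mulr_natr sqrtrM ?mulr_ge0 ?sqr_ge0 ?pi_ge0//.
rewrite sqrtrM ?sqr_ge0// sqrtr_sqr gtr0_norm//.
have sqrt_pi_gt0 : 0 < Num.sqrt (pi : R) by rewrite sqrtr_gt0 pi_gt0.
have sqrt2_gt0 : 0 < Num.sqrt 2 :> R by rewrite sqrtr_gt0.
rewrite !invfM; field.
all: by rewrite ?gt_eqF// ltW.
Qed.

Lemma integral_normal_pdf_itv (s a b : R) : 0 < s -> a <= b ->
  (\int[mu]_(x in `[a, b]) (normal_pdf 0 s x)%:E =
  ((erf (b / (Num.sqrt 2 * s)) - erf (a / (Num.sqrt 2 * s))) / 2)%:E)%E.
Proof.
move=> s0 ab; set c := Num.sqrt 2 * s.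
have c0 : 0 < c by rewrite mulr_gt0// sqrtr_gt0.
have k0 : 0 < c^-1 by rewrite invr_gt0.
transitivity (\int[mu]_(x in `[a, b])
    ((normal_peak s * c)%:E * (gauss_fun (c^-1 * x) * c^-1)%:E))%E.
  apply: eq_integral => x _; rewrite -EFinM; congr EFin.
  rewrite normal_pdfE ?gt_eqF//= /normal_fun subr0 /gauss_fun.
  rewrite -mulrA; congr (_ * _); rewrite mulrCA divff ?gt_eqF// mulr1.
  congr expR; rewrite exprMn exprVn /c exprMn sqr_sqrtr//.
  by rewrite -mulr_natl mulNr mulrC.
rewrite ge0_integralZl//; last 3 first.
- apply/measurable_EFinP; apply: measurable_funTS.
  apply: measurable_funM => //; apply: measurableT_comp => //.
  exact: measurable_gauss_fun.
- by move=> x _; rewrite lee_fin mulr_ge0 ?gauss_fun_ge0// ltW.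
- by rewrite lee_fin mulr_ge0 ?normal_peak_ge0// ltW.
rewrite -integration_by_substitution_scale//; last exact: continuous_gauss_fun.
rewrite -(fineK (integrable_fin_num _ (integrable_gauss_fun_itv _ _)))//.
rewrite -EFinM -/(Rintegral _ _ _) Rintegral_gauss_fun_itv ?ler_pM2l//.
rewrite normal_peak_sqrt2// !erfE !(mulrC _ c^-1).
have sqrt_pi_gt0 : 0 < Num.sqrt (pi : R) by rewrite sqrtr_gt0 pi_gt0.
by congr EFin; field; rewrite gt_eqF.
Qed.

Lemma normal_prob_itv_oc (s a b : R) : 0 < s -> a <= b ->
  normal_prob 0 s `]a, b] =
  ((erf (b / (Num.sqrt 2 * s)) - erf (a / (Num.sqrt 2 * s))) / 2)%:E.
Proof.
move=> s0 ab; rewrite /normal_prob integral_itv_obnd_cbnd ?integral_normal_pdf_itv//.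
by apply/measurable_EFinP; apply: measurable_funTS; exact: measurable_normal_pdf.
Qed.

Lemma normal_prob_itv_co (s a b : R) : 0 < s -> a <= b ->
  normal_prob 0 s `[a, b[ =
  ((erf (b / (Num.sqrt 2 * s)) - erf (a / (Num.sqrt 2 * s))) / 2)%:E.
Proof.
move=> s0 ab; rewrite /normal_prob integral_itv_bndo_bndc ?integral_normal_pdf_itv//.
by apply/measurable_EFinP; apply: measurable_funTS; exact: measurable_normal_pdf.
Qed.

End normal_itv.

Section soft_threshold.
Context {R : realType}.

Definition jump_set (lam eps m : R) : set R :=
  `]lam - eps - m, lam - m] `|` `[- lam - eps - m, - lam - m[.

Lemma measurable_jump_set lam eps m : measurable (jump_set lam eps m).
Proof. exact: measurableU. Qed.

Lemma in_jump_set lam eps m u : (u \in jump_set lam eps m) =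
  (lam - eps < m + u <= lam) || (- lam - eps <= m + u < - lam).
Proof.
apply/idP/idP.
- case/set_mem => /=; rewrite in_itv /= => /andP[h1 h2]; apply/orP;
    [left|right]; apply/andP; split; lra.
- by case/orP => /andP[h1 h2]; apply/mem_set; [left|right];
    rewrite /= in_itv /=; apply/andP; split; lra.
Qed.

Lemma sg_threshold_shift (lam eps m u : R) :
  0 < lam -> 0 < eps -> eps < 2 * lam ->
  (if `|m + u + eps| <= lam then 0 else - Num.sg (m + u + eps))
  - (if `|m + u| <= lam then 0 else - Num.sg (m + u))
  = - \1_(jump_set lam eps m) u.
Proof.
move=> l0 e0 el.
have sgE t : (if `|t| <= lam then 0 else - Num.sg t) =
    if lam < t then -1 else if t < - lam then 1 else 0.
  rewrite ler_norml; have [lt|tl] := ltP lam t; first by rewrite andbF gtr0_sg//; lra.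
  by have [tl'|//] := ltP t (- lam); rewrite ltr0_sg ?opprK//; lra.
rewrite !sgE indicE in_jump_set ltrBlDr lerBlDr !leNgt; set t := m + u.
have [h1|h1] := ltP lam (t + eps); have [h2|h2] := ltP lam t;
have [h3|h3] := ltP (t + eps) (- lam); have [h4|h4] := ltP t (- lam);
rewrite /=; lra.
Qed.

Lemma grad2_dfFD_jump n (m u : 'I_n -> R) (lam eps : R) :
  0 < lam -> 0 < eps -> eps < 2 * lam ->
  grad2_dfFD (fun i => m i + u i) lam eps =
  - eps^-1 * \sum_(i < n) \1_(jump_set lam eps (m i)) (u i).
Proof.
move=> l0 e0 el; rewrite /grad2_dfFD mulNr -mulrN -sumrN; congr (_ * _).
apply: eq_bigr => i _; rewrite /dST /basis_vec eqxx mulr1.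
exact: sg_threshold_shift.
Qed.

End soft_threshold.

Lemma normal_prob_jump_set {R : realType} (s lam eps m : R) :
  0 < s -> 0 < lam -> 0 < eps -> eps < 2 * lam ->
  normal_prob 0 s (jump_set lam eps m) = (varphi s m lam eps / 2)%:E.
Proof.
move=> s0 l0 e0 el; rewrite /jump_set measureU//; last first.
  rewrite -subset0 => x [] /=; rewrite !in_itv/= => /andP[h1 _] /andP[_ h2]; lra.
have h1 : lam - eps - m <= lam - m by lra.
have h2 : - lam - eps - m <= - lam - m by lra.
rewrite /= normal_prob_itv_oc// normal_prob_itv_co//.
rewrite -EFinD /varphi; congr EFin.
set c := Num.sqrt 2 * s.
have flip (z w : R) : z - w = - (w - z) by rewrite opprB.
rewrite (flip lam m) (flip (lam - eps) m) (flip (- lam) m) (flip (- lam - eps) m).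
rewrite !mulNr !erfN.
have -> : m - (lam - eps) = m - lam + eps by lra.
have -> : m - (- lam - eps) = m + lam + eps by lra.
have -> : m - - lam = m + lam by lra.
lra.
Qed.

Lemma sum_pairwise_products {R : comRingType} n (p : 'I_n -> R) :
  \sum_(i < n) \sum_(j < n) (if i == j then p i else p i * p j) =
  \sum_(i < n) p i + (\sum_(i < n) p i) ^+ 2 - \sum_(i < n) p i ^+ 2.
Proof.
have row i : \sum_(j < n) (if i == j then p i else p i * p j) =
    p i * \sum_(j < n) p j + (p i - p i ^+ 2).
  rewrite (bigD1 i)//= eqxx [in RHS](bigD1 i)//= mulrDr.
  rewrite (eq_bigr (fun j => p i * p j)); last by move=> j /negbTE; rewrite eq_sym => ->.
  by rewrite -mulr_sumr; ring.
rewrite (eq_bigr _ (fun i _ => row i)) big_split /= -mulr_suml sumrB; ring.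
Qed.

Section indicator_sums.
Context d (T : measurableType d) (R : realType) (P : probability T R).
Local Open Scope ereal_scope.

Lemma Lfun1_indic (A : set T) : measurable A -> (\1_A : T -> R) \in Lfun P 1.
Proof. by move=> mA; apply/Lfun1_integrable; exact: integrable_indic. Qed.

Lemma Lfun1_sum n (X : 'I_n -> T -> R) : (forall i, X i \in Lfun P 1) ->
  (fun w => \sum_(i < n) X i w)%R \in Lfun P 1.
Proof. by move=> X1; rewrite -fct_sumE rpred_sum. Qed.

Lemma expectation_sum_ord n (X : 'I_n -> T -> R) : (forall i, X i \in Lfun P 1) ->
  'E_P[fun w => \sum_(i < n) X i w]%R = \sum_(i < n) 'E_P[X i].
Proof.
move=> X1; rewrite -fct_sumE -(big_map X predT id) expectation_sum ?big_map//.
by move=> _ /mapP[i _ ->].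
Qed.

Lemma Lfun1_scale (a : R) (X : T -> R) : X \in Lfun P 1 ->
  (fun w => a * X w)%R \in Lfun P 1.
Proof.
move=> X1; rewrite (_ : (fun w => _) = a \o* X)%R; last first.
  by apply/funext => w; rewrite /= mulrC.
exact: Lfun_scale.
Qed.

Lemma expectation_scaled_indic (a q : R) (A : set T) : measurable A ->
  P A = q%:E -> 'E_P[fun w => a * \1_A w]%R = (a * q)%:E.
Proof.
move=> mA PA; rewrite (_ : (fun w => _) = a \o* \1_A)%R; last first.
  by apply/funext => w; rewrite /= mulrC.
by rewrite expectationZl ?Lfun1_indic// expectation_indic// PA.
Qed.

Section count.
Variables (n : nat) (E : 'I_n -> set T) (p : 'I_n -> R).
Hypothesis mE : forall i, measurable (E i).
Hypothesis PE : forall i, P (E i) = (p i)%:E.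

Lemma Lfun1_scaled_count (k : R) :
  (fun w => k * \sum_(i < n) \1_(E i) w)%R \in Lfun P 1.
Proof. by apply/Lfun1_scale/Lfun1_sum => i; exact: Lfun1_indic. Qed.

Lemma expectation_scaled_count (k : R) :
  'E_P[fun w => k * \sum_(i < n) \1_(E i) w]%R = (k * \sum_(i < n) p i)%:E.
Proof.
under eq_fun do rewrite mulr_sumr.
rewrite expectation_sum_ord => [|i]; last exact/Lfun1_scale/Lfun1_indic.
by rewrite mulr_sumr -sumEFin; apply: eq_bigr => i _; exact: expectation_scaled_indic.
Qed.

Hypothesis PEE : forall i j, i != j -> P (E i `&` E j) = (p i * p j)%:E.

Lemma variance_scaled_count (k : R) :
  'V_P[fun w => k * \sum_(i < n) \1_(E i) w]%R =
  (k ^+ 2 * (\sum_(i < n) p i - \sum_(i < n) p i ^+ 2))%:E.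
Proof.
set X := (fun w => _)%R.
have XX : (X * X)%R =
    (fun w => \sum_(i < n) \sum_(j < n) k ^+ 2 * \1_(E i `&` E j) w)%R.
  apply/funext => w; rewrite /X !fctE mulrACA -expr2 mulr_suml mulr_sumr.
  apply: eq_bigr => i _; rewrite !mulr_sumr.
  by apply: eq_bigr => j _; rewrite indicI.
have mEE i j : measurable (E i `&` E j) by exact: measurableI.
have ind_sum i : (fun w => \sum_(j < n) k ^+ 2 * \1_(E i `&` E j) w)%R \in Lfun P 1.
  by apply: Lfun1_sum => j; exact/Lfun1_scale/Lfun1_indic.
rewrite /variance covarianceE ?Lfun1_scaled_count// ?XX ?Lfun1_sum//.
rewrite expectation_scaled_count expectation_sum_ord//.
rewrite (eq_bigr (fun i => (\sum_(j < n)
    k ^+ 2 * (if i == j then p i else p i * p j))%:E)); last first.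
  move=> i _; rewrite expectation_sum_ord => [|j]; last exact/Lfun1_scale/Lfun1_indic.
  rewrite -sumEFin; apply: eq_bigr => j _; apply: expectation_scaled_indic => //.
  by case: eqVneq => [<-|/PEE//]; rewrite setIid.
rewrite sumEFin -EFinM -EFinB; congr EFin.
under eq_bigr do rewrite -mulr_sumr.
by rewrite -mulr_sumr sum_pairwise_products; ring.
Qed.

End count.

End indicator_sums.

Lemma mutually_independent_pair d (T : measurableType d) (R : realType)
    (P : probability T R) n (W : 'I_n -> {RV P >-> R}) (A B : set R) i j :
  mutually_independent W -> measurable A -> measurable B -> i != j ->
  P (W i @^-1` A `&` W j @^-1` B) = (P (W i @^-1` A) * P (W j @^-1` B))%E.
Proof.
move=> indW mA mB ij; have ji : j != i by rewrite eq_sym.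
pose C k := if k == i then A else if k == j then B else setT.
have mC k : measurable (C k) by rewrite /C; case: ifP => _ //; case: ifP.
have -> : W i @^-1` A `&` W j @^-1` B = \bigcap_(k in [set: 'I_n]) (W k @^-1` C k).
  apply/seteqP; split => [w [wA wB] k _|w wC]; last first.
    by split; [have := wC i I|have := wC j I]; rewrite /C /= ?eqxx ?(negbTE ji) ?eqxx.
  by rewrite /C /=; case: ifP => [/eqP->//|_]; case: ifP => [/eqP->//|_].
rewrite indW// (bigD1 i)//= (bigD1 j)//= big1 ?mule1.
  by rewrite /C eqxx (negbTE ji) eqxx.
move=> k /andP[ki kj]; rewrite /C (negbTE ki) (negbTE kj) preimage_setT.
exact: probability_setT.
Qed.

Theorem lemma1 (R : realType) (n : nat) (d : measure_display)
  (T : measurableType d) (P : probability T R)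
  (W : 'I_n -> {RV P >-> R}) (sigma lam eps : R) (mu0 : 'I_n -> R) :
  0 < sigma -> 0 < lam -> 0 < eps -> eps < 2 * lam ->
  mutually_independent W ->
  (forall i (A : set R), measurable A ->
     distribution P (W i) A = normal_prob 0 sigma A) ->
  let X := fun w : T => grad2_dfFD (fun i => mu0 i + W i w) lam eps in
  ('E_P[X] = (- 2^-1 * \sum_(i < n) varphi sigma (mu0 i) lam eps / eps)%:E
   /\ 'V_P[X] = ((2 * eps)^-1 * \sum_(i < n) varphi sigma (mu0 i) lam eps / eps
                 - 4^-1 * \sum_(i < n) (varphi sigma (mu0 i) lam eps / eps) ^+ 2)%:E)%E.
Proof.
move=> s0 l0 e0 el indW lawW X.
pose E i := W i @^-1` jump_set lam eps (mu0 i).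
pose p i := varphi sigma (mu0 i) lam eps / 2.
have mE i : measurable (E i) := measurable_funPTI (W i) (measurable_jump_set _ _ _).
have PE i : P (E i) = (p i)%:E.
  by rewrite -normal_prob_jump_set// -(lawW i _ (measurable_jump_set _ _ _)).
have PEE i j : i != j -> P (E i `&` E j) = (p i * p j)%:E.
  move=> ij; rewrite (mutually_independent_pair indW (measurable_jump_set _ _ _)
    (measurable_jump_set _ _ _) ij).
  by rewrite -/(E i) -/(E j) !PE.
have -> : X = (fun w => - eps^-1 * \sum_(i < n) \1_(E i) w)%R.
  by apply/funext => w; rewrite /X grad2_dfFD_jump.
rewrite (expectation_scaled_count mE PE) (variance_scaled_count mE PE PEE).
have e0' : eps != 0 by rewrite gt_eqF.
split; congr EFin.
- by rewrite !mulr_sumr; apply: eq_bigr => i _; rewrite /p; field.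
- rewrite mulrBr !mulr_sumr; congr (_ - _); apply: eq_bigr => i _;
    by rewrite /p; field.
Qed.
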